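(* For every $\rho\in\hom_0(\mathrm{PSL}_2(\mathbb Z),\mathrm{Isom}(X))$, the orientation-preserving isometry $\rho(baba)$ is given by a matrix in $\mathrm{SL}_3(\mathbb R)$ satisfying $$\mathrm{tr}(\rho(baba))=\mathrm{tr}(\rho(baba)^{-1}).$$
   Context: $X=\mathrm{SL}_3(\mathbb R)/\mathrm{SO}(3)$ is the Riemannian symmetric space and $\mathrm{Isom}(X)$ its full isometry group. Orientation-preserving isometries are $[M]\mapsto[gM]$ with $g\in\mathrm{SL}_3(\mathbb R)$ (identified with the matrix $g$); with $M^*=(M^{-1})^T$, orientation-reversing isometries have the form $[M]\mapsto[AM^*]$, and the inversion at $[A]$ is $[M]\mapsto[AA^TM^*]$. Let $R_\theta=\begin{pmatrix}1&0&0\\0&\cos\theta&-\sin\theta\\0&\sin\theta&\cos\theta\end{pmatrix}$. Present $\mathrm{PSL}_2(\mathbb Z)=\langle a,b\mid a^2=b^3=1\rangle$; $\hom_0(\mathrm{PSL}_2(\mathbb Z),\mathrm{Isom}(X))$ is the set of homomorphisms with $\rho(a)$ an inversion and $\rho(b)$ conjugate to $[M]\mapsto[R_{2\pi/3}M]$. *)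

From HB Require Import structures.
From mathcomp Require Import all_boot all_order all_algebra.
From mathcomp Require Import all_classical all_reals all_analysis.
Set Implicit Arguments. Unset Strict Implicit. Unset Printing Implicit Defensive.
Import Order.TTheory GRing.Theory Num.Theory.
Local Open Scope ring_scope.

(* Isom(X), X = SL_3(R)/SO(3), is modelled as pairs (o, g) with g in SL_3(R):
   (false, g) is the orientation-preserving isometry [M] |-> [g M],
   (true,  A) is the orientation-reversing isometry  [M] |-> [A M^*],
   where M^* = (M^{-1})^T.  Both parametrizations are bijective. *)

Definition mstar {R : realType} (M : 'M[R]_3) : 'M[R]_3 := (invmx M)^T.

Definition isom {R : realType} (x : bool * 'M[R]_3) : Prop := \det x.2 = 1.

(* composition x o y (first y, then x):
   g o h = gh, g o s_B = s_{gB}, s_A o h = s_{A h^*}, s_A o s_B = A B^*. *)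
Definition imul {R : realType} (x y : bool * 'M[R]_3) : bool * 'M[R]_3 :=
  (addb x.1 y.1, x.2 *m (if x.1 then mstar y.2 else y.2)).

Definition iid {R : realType} : bool * 'M[R]_3 := (false, 1%:M).

Definition Rot {R : realType} (t : R) : 'M[R]_3 :=
  \matrix_(i < 3, j < 3)
    (if (i == 0%N :> nat) && (j == 0%N :> nat) then 1
     else if (i == 0%N :> nat) || (j == 0%N :> nat) then 0
     else if (i == 1%N :> nat) && (j == 1%N :> nat) then cos t
     else if (i == 1%N :> nat) && (j == 2%N :> nat) then - sin t
     else if (i == 2%N :> nat) && (j == 1%N :> nat) then sin t
     else cos t).

(* the inversion at [A] : [M] |-> [A A^T M^*] *)
Definition is_inversion {R : realType} (x : bool * 'M[R]_3) : Prop :=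
  exists A : 'M[R]_3, \det A = 1 /\ x = (true, A *m A^T).

(* x is conjugate in Isom(X) to [M] |-> [R_{2pi/3} M]:  x = h r h^{-1},
   written equivalently as x o h = h o r *)
Definition conj_rot {R : realType} (x : bool * 'M[R]_3) : Prop :=
  exists h : bool * 'M[R]_3, isom h /\
    imul x h = imul h (false, Rot (2 * pi / 3)).

(* A homomorphism rho : PSL_2(Z) = <a, b | a^2 = b^3 = 1> -> Isom(X) is the
   same as a pair (rho a, rho b) = (alpha, beta) with alpha^2 = beta^3 = 1. *)
Definition hom0 {R : realType} (alpha beta : bool * 'M[R]_3) : Prop :=
  [/\ isom alpha, isom beta, imul alpha alpha = iid &
      imul beta (imul beta beta) = iid] /\ is_inversion alpha /\ conj_rot beta.

(* Being conjugate to a rotation, rho(b) = [M] |-> [B M] preserves orientation, so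
   with rho(a) = [M] |-> [S M^*] the element rho(baba) is [M] |-> [N N^* M] for
   N = B S.  Now N N^* - 1 = (N - N^T) N^*, and N - N^T is skew-symmetric of odd
   size, so 1 is an eigenvalue of X = N N^*.  For a 3x3 matrix X of determinant 1,
   det (X - 1) = tr X - tr (adj X) = tr X - tr X^-1, which therefore vanishes. *)
From HB Require Import structures.
From mathcomp Require Import all_boot all_order all_algebra.
From mathcomp Require Import all_classical all_reals all_analysis.
From mathcomp Require Import ring.
Set Implicit Arguments. Unset Strict Implicit. Unset Printing Implicit Defensive.
Import Order.TTheory GRing.Theory Num.Theory.
Local Open Scope ring_scope.

Lemma det_skew_odd (R : numDomainType) n (K : 'M[R]_n) :
  odd n -> K^T = - K -> \det K = 0.
Proof.
move=> odd_n skewK.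
have detKN : \det K = - \det K.
  by rewrite -{1}det_tr skewK -scaleN1r detZ -signr_odd odd_n expr1 mulN1r.
have : \det K *+ 2 == 0 by rewrite mulr2n {1}detKN addNr.
by rewrite mulrn_eq0 /= => /eqP.
Qed.

Lemma det_mul_trmx_invmx (R : comUnitRingType) n (M : 'M[R]_n) :
  M \in unitmx -> \det (M *m (invmx M)^T) = 1.
Proof.
by move=> uM; rewrite det_mulmx det_tr det_inv mulrV // -unitmxE.
Qed.

Lemma det_mul_trmx_invmx_sub1 (R : numDomainType) n (M : 'M[R]_n) :
  odd n -> M \in unitmx -> \det (M *m (invmx M)^T - 1%:M) = 0.
Proof.
move=> odd_n uM.
have -> : M *m (invmx M)^T - 1%:M = (M - M^T) *m (invmx M)^T.
  by rewrite mulmxBl trmx_inv mulmxV // unitmx_tr.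
rewrite det_mulmx (@det_skew_odd _ _ (M - M^T)) ?mul0r //.
by rewrite linearB /= trmxK opprB.
Qed.

Lemma det_mx3_sub1 (R : comNzRingType) (A : 'M[R]_3) :
  \det (A - 1%:M) = \det A - \tr (\adj A) + \tr A - 1.
Proof.
set f := fun i j : nat => A (inord i) (inord j).
have Af : forall i j, A i j = f i j by move=> i j; rewrite /f !inord_val.
rewrite /mxtrace !big_ord_recl big_ord0 !mxE.
rewrite !(expand_det_row _ ord0) !big_ord_recl !big_ord0 /cofactor.
rewrite !(expand_det_row _ ord0) !big_ord_recl !big_ord0 /cofactor.
rewrite !det_mx11 !mxE !Af /= /bump /= ?(add0n, addn0, add1n).
ring.
Qed.

Lemma tr_invmx_mx3_det1 (R : comUnitRingType) (X : 'M[R]_3) :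
  \det X = 1 -> \det (X - 1%:M) = 0 -> \tr (invmx X) = \tr X.
Proof.
move=> detX1 eigen1.
have -> : invmx X = \adj X by rewrite /invmx unitmxE detX1 unitr1 invr1 scale1r.
by apply/eqP; rewrite -subr_eq0 -oppr_eq0 -eigen1 det_mx3_sub1 detX1; apply/eqP; ring.
Qed.

Lemma conj_rot_orientation (R : realType) (x : bool * 'M[R]_3) :
  conj_rot x -> x.1 = false.
Proof. by case=> h [_ /(congr1 fst)] /=; rewrite addbF; case: x.1; case: h.1. Qed.

Lemma imul_baba (R : realType) (B S : 'M[R]_3) :
  imul (false, B) (imul (true, S) (imul (false, B) (true, S))) =
  (false, (B *m S) *m mstar (B *m S)).
Proof. by rewrite /imul /= mulmxA. Qed.

Theorem lemma4p3 (R : realType) (alpha beta : bool * 'M[R]_3) :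
  hom0 alpha beta ->
  let g := imul beta (imul alpha (imul beta alpha)) in
  [/\ g.1 = false, \det g.2 = 1 & \tr g.2 = \tr (invmx g.2)].
Proof.
case: beta => b B [[_ detB _ _] [[A [detA ->]] /conj_rot_orientation b0]] g.
rewrite {}/g; have {b0} -> : b = false := b0.
rewrite imul_baba /mstar; set N := B *m (A *m A^T).
have unitN : N \in unitmx.
  by rewrite unitmxE !det_mulmx det_tr detB detA !mulr1 unitr1.
have detNN : \det (N *m (invmx N)^T) = 1 := det_mul_trmx_invmx unitN.
split=> //; symmetry; apply: tr_invmx_mx3_det1 => //.
exact: det_mul_trmx_invmx_sub1.
Qed.
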